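(* Let $k\ge\ell\ge\ell'\ge t\ge1$ be integers, let $\mathcal{F}\subseteq\{F\subseteq[k]:|F|\le\ell\}$ and $\mathcal{G}\subseteq\{G\subseteq[k]:|G|\le\ell'\}$ be non-empty cross $t$-intersecting families, and for $i\in[2]$ let $\omega_i:[0,k]\to\mathbb{R}_{\ge0}$ be non-increasing functions. Then $$\omega_1(\mathcal{F})+\omega_2(\mathcal{G})\le\max\Big\{\max_{a\in[t,\ell']}\{\omega_1(\mathcal{K}_k(a,\ell,t))+\omega_2(\mathcal{S}_k(a,\ell'))\},\ \max_{a\in[t,\ell]}\{\omega_1(\mathcal{S}_k(a,\ell))+\omega_2(\mathcal{K}_k(a,\ell',t))\}\Big\},$$ where $\mathcal{K}_k(a,s,t)=\{K\subseteq[k]:|K|\le s,\ |K\cap[a]|\ge t\}$ and $\mathcal{S}_k(a,s)=\{S\subseteq[k]:|S|\le s,\ [a]\subseteq S\}$.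
   Context: $[p,q]=\{p,\dots,q\}$, $[q]=[1,q]$. Families are cross $t$-intersecting if $|F\cap G|\ge t$ for all $F\in\mathcal{F},G\in\mathcal{G}$. For $\omega:[0,k]\to\mathbb{R}_{\ge0}$, $\omega(F)=\omega(|F|)$ and $\omega(\mathcal{F})=\sum_{F\in\mathcal{F}}\omega(F)$; non-increasing means $\omega(i)\ge\omega(j)$ whenever $i\le j$. *)

From mathcomp Require Import all_boot all_order all_algebra.
Set Implicit Arguments. Unset Strict Implicit. Unset Printing Implicit Defensive.
Import Order.TTheory GRing.Theory Num.Theory.
Local Open Scope ring_scope.

(* Ground set [k] = {1..k} is modelled by 'I_k (element i stands for i+1);
   so the initial segment [a] is {i : 'I_k | i < a}. *)
Definition seg (k a : nat) : {set 'I_k} := [set i : 'I_k | (i < a)%N].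

Definition cross_tint (k t : nat) (F G : {set {set 'I_k}}) : Prop :=
  forall A B, A \in F -> B \in G -> (t <= #|A :&: B|)%N.

Definition wfam (R : numDomainType) (k : nat) (w : nat -> R)
  (F : {set {set 'I_k}}) : R := \sum_(A in F) w #|A|.

Definition Kfam (k a s t : nat) : {set {set 'I_k}} :=
  [set K : {set 'I_k} | (#|K| <= s)%N && (t <= #|K :&: seg k a|)%N].

Definition Sfam (k a s : nat) : {set {set 'I_k}} :=
  [set S : {set 'I_k} | (#|S| <= s)%N && (seg k a \subset S)].

Definition good_weight (R : realDomainType) (k : nat) (w : nat -> R) : Prop :=
  (forall i, (i <= k)%N -> 0 <= w i) /\
  (forall i j, (i <= j)%N -> (j <= k)%N -> w j <= w i).

From mathcomp Require Import all_boot all_order all_algebra fingroup perm lra.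
Import Order.TTheory GRing.Theory Num.Theory.
Local Open Scope ring_scope.

(* Induction on the ground set [m], the weights being required to be non-negative
   and non-increasing only on [0, m].  Replacing F and G by a saturated cross
   t-intersecting pair containing them only adds weight.  If one of the two families
   is {[m]}, the pair lies below (S(m,m,_), K(m,m,_,t)).  Otherwise some point is
   avoided by a member of each family, and a transposition makes it the last point x.
   Call (A, B) critical if x \in A :&: B and #|A :&: B| = t.  On the side whose critical
   members weigh more, add these members with x removed (they are new sets, and the
   weights are non-increasing); on the other side, drop the critical members.  Now all
   pairs meet in t points other than x, so removing x leaves a cross t-intersecting
   pair on [m-1].  Weighting a trace X by w(|X|) + [|X| < s] w(|X|+1), s the size
   bound, accounts for X and x |: X at once, and K(a,s,t), S(a,s) over [m] are exactly
   the preimages of those over [m-1] under this correspondence, so the bound for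
   [m-1] transfers back to [m]. *)

Section FinsetFacts.
Local Set Implicit Arguments.
Local Unset Strict Implicit.
Variable T : finType.
Implicit Types (A B : {set T}) (x y z : T).

Lemma setD1_id x A : x \notin A -> A :\ x = A.
Proof. by move=> xA; apply/setDidPl; rewrite disjoint_sym disjoints1. Qed.

Lemma card_le_setD1 x s A :
  (#|A| <= s)%N = (#|A :\ x| <= s)%N && ((x \in A) ==> (#|A :\ x| < s)%N).
Proof.
by rewrite (cardsD1 x A); case: (x \in A); rewrite /= ?andbT // andb_idl // => /ltnW.
Qed.

Lemma leq_card_exchange A B y z : z \in A -> y \notin A -> y \in B ->
  (#|A :&: B| <= #|(y |: (A :\ z)) :&: B|)%N.
Proof.
move=> zA yA yB; rewrite setIUl (setIidPl (_ : [set y] \subset B)) ?sub1set //.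
rewrite setIDAC cardsU1 !inE (negbTE yA) andbF /= add1n.
by rewrite (cardsD1 z (A :&: B)); case: (z \in _).
Qed.

End FinsetFacts.

Lemma ler_sum_cond (R : numDomainType) (T : finType) (P Q : pred T) (f g : T -> R) :
  (forall x, P x -> Q x /\ f x <= g x) -> (forall x, Q x -> 0 <= g x) ->
  \sum_(x | P x) f x <= \sum_(x | Q x) g x.
Proof.
move=> PQ g_ge0; rewrite [leLHS]big_mkcond [leRHS]big_mkcond /=.
apply: ler_sum => x _; case Px: (P x); first by have [-> ] := PQ x Px.
by case Qx: (Q x) => //; exact: g_ge0.
Qed.

Lemma le_bigmax_minnS (R : realDomainType) (t s m : nat) (f g : nat -> R) :
  (forall a, (a <= m)%N -> f a = g a) ->
  \big[Num.max/0]_(t <= a < (minn s m).+1) f a <=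
  \big[Num.max/0]_(t <= a < (minn s m.+1).+1) g a.
Proof.
move=> fg; rewrite (eq_big_nat _ _ (F2 := g)) => [|a /andP[_]]; last first.
  by rewrite ltnS leq_min => /andP[_ /fg].
by apply: le_bigmax_nat; rewrite // ltnS leq_min geq_minl (leq_trans (geq_minr _ _)).
Qed.

Section CrossIntersectingWeights.
Local Set Implicit Arguments.
Local Unset Strict Implicit.
Variables (R : realFieldType) (k : nat).
Implicit Types (F G P Q : {set {set 'I_k}}) (A B X : {set 'I_k}) (w : nat -> R).

Definition weight_on m w :=
  (forall i, (i <= m)%N -> 0 <= w i) /\ (forall i, (i < m)%N -> w i.+1 <= w i).

Definition fam_on m s F := forall A, A \in F -> (A \subset seg k m) && (#|A| <= s)%N.

Definition Kfam_on m a s t :=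
  [set K : {set 'I_k} | [&& K \subset seg k m, #|K| <= s & t <= #|K :&: seg k a|]%N].

Definition Sfam_on m a s :=
  [set S : {set 'I_k} | [&& S \subset seg k m, #|S| <= s & seg k a \subset S]%N].

Definition bound_on m l l' t w1 w2 :=
  Num.max
    (\big[Num.max/0]_(t <= a < (minn l' m).+1)
        (wfam w1 (Kfam_on m a l t) + wfam w2 (Sfam_on m a l')))
    (\big[Num.max/0]_(t <= a < (minn l m).+1)
        (wfam w1 (Sfam_on m a l) + wfam w2 (Kfam_on m a l' t))).

Lemma bound_onC m l l' t w1 w2 : bound_on m l l' t w1 w2 = bound_on m l' l t w2 w1.
Proof.
rewrite /bound_on maxC; congr Num.max; apply: eq_bigr => a _; exact: addrC.
Qed.

Lemma card_seg m : (m <= k)%N -> #|seg k m| = m.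
Proof.
move=> le_mk; have -> : seg k m = [set widen_ord le_mk i | i : 'I_m].
  apply/setP => i; rewrite inE; apply/idP/imsetP => [lt_im|[j _ ->]].
    by exists (Ordinal lt_im) => //; apply: val_inj.
  by rewrite /= ltn_ord.
by rewrite card_imset ?card_ord // => i j /(congr1 val) /= /val_inj.
Qed.

Lemma card_le_seg m A : (m <= k)%N -> A \subset seg k m -> (#|A| <= m)%N.
Proof. by move=> le_mk sAm; rewrite -(card_seg le_mk) subset_leq_card. Qed.

Lemma wfam_le_subset w F G : {subset F <= G} -> (forall A, A \in G -> 0 <= w #|A|) ->
  wfam w F <= wfam w G.
Proof. by move=> sFG w_ge0; apply: ler_sum_cond => // A AF; split; [apply: sFG|]. Qed.

Lemma wfam_setU w F G : [disjoint F & G] -> wfam w (F :|: G) = wfam w F + wfam w G.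
Proof.
move=> dFG; rewrite /wfam (big_setID F) setUK setDUl setDv set0U.
by rewrite (setDidPl _) // disjoint_sym.
Qed.

Lemma fam_on_sub m s F A : fam_on m s F -> A \in F -> A \subset seg k m.
Proof. by move=> Fon /Fon /andP[]. Qed.

Lemma fam_on_card m s F A : fam_on m s F -> A \in F -> (#|A| <= s)%N.
Proof. by move=> Fon /Fon /andP[]. Qed.

Lemma fam_on_nonneg m s w F : (m <= k)%N -> weight_on m w -> fam_on m s F ->
  forall A, A \in F -> 0 <= w #|A|.
Proof. by move=> le_mk [w_ge0 _] Fon A AF; apply/w_ge0/card_le_seg/(fam_on_sub Fon). Qed.

Lemma cross_tint_sym t F G : cross_tint t F G -> cross_tint t G F.
Proof. by move=> FG B A BG AF; rewrite setIC; apply: FG. Qed.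

Definition saturated m s t F G := forall A, A \subset seg k m -> (#|A| <= s)%N ->
  (forall B, B \in G -> (t <= #|A :&: B|)%N) -> A \in F.

Lemma saturate m l l' t F G : fam_on m l F -> fam_on m l' G -> cross_tint t F G ->
  exists F' G', [/\ {subset F <= F'}, {subset G <= G'}, fam_on m l F', fam_on m l' G'
    & cross_tint t F' G' /\ saturated m l t F' G'].
Proof.
move=> Fon Gon FG.
pose G' := [set B : {set 'I_k} | [&& B \subset seg k m, #|B| <= l'
                                 & [forall A in F, t <= #|A :&: B|]]%N].
pose F' := [set A : {set 'I_k} | [&& A \subset seg k m, #|A| <= l
                                 & [forall B in G', t <= #|A :&: B|]]%N].
have sGG' : {subset G <= G'}.
  move=> B BG; rewrite inE; have /andP[-> ->] := Gon _ BG.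
  by apply/forall_inP => A AF; apply: FG.
exists F', G'; split => [A AF||A|B|]; first 2 last.
- by rewrite inE => /and3P[-> ->].
- by rewrite inE => /and3P[-> ->].
- split=> [A B|A sAm cardA AG']; last by rewrite inE sAm cardA; apply/forall_inP.
  by rewrite inE => /and3P[_ _ /forall_inP]; apply.
- rewrite inE; have /andP[-> ->] := Fon _ AF.
  by apply/forall_inP => B; rewrite inE => /and3P[_ _ /forall_inP]; apply.
- exact: sGG'.
Qed.

Lemma full_or_missed_point m l l' t F G : F != set0 -> G != set0 ->
  fam_on m l F -> fam_on m l' G -> cross_tint t F G -> saturated m l t F G ->
  [\/ exists y, [/\ y \in seg k m, exists2 A, A \in F & y \notin A
                                 & exists2 B, B \in G & y \notin B],
      forall A, A \in F -> A = seg k m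
    | forall B, B \in G -> B = seg k m].
Proof.
move=> F0 G0 Fon Gon FG satF.
have [/forall_inP Ffull|] := boolP [forall A in F, seg k m \subset A].
  by apply: Or32 => A AF; apply/eqP; rewrite eqEsubset Ffull ?(fam_on_sub Fon).
rewrite negb_forall_in => /exists_inP[A0 A0F /subsetPn[y ym yA0]].
have [/exists_inP[B BG yB]|] := boolP [exists B in G, y \notin B].
  by apply: Or31; exists y; split=> //; [exists A0 | exists B].
rewrite negb_exists_in => /forall_inP yG.
have [/forall_inP Gfull|] := boolP [forall B in G, seg k m \subset B].
  by apply: Or33 => B BG; apply/eqP; rewrite eqEsubset Gfull ?(fam_on_sub Gon).
rewrite negb_forall_in => /exists_inP[B0 B0G /subsetPn[z zm zB0]].
have [/exists_inP[A AF zA]|] := boolP [exists A in F, z \notin A].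
  by apply: Or31; exists z; split=> //; [exists A | exists B0].
rewrite negb_exists_in => /forall_inP zF.
have zA0 : z \in A0 by apply/negbNE/zF.
have A1F : y |: (A0 :\ z) \in F.
  apply: satF => [||B BG].
  - rewrite subUset sub1set ym (subset_trans (subsetDl _ _)) //.
    exact: fam_on_sub Fon A0F.
  - rewrite cardsU1 !inE (negbTE yA0) andbF add1n.
    by move: (fam_on_card Fon A0F); rewrite (cardsD1 z A0) zA0.
  - by apply: leq_trans (FG _ _ A0F BG) (leq_card_exchange _ _ _) => //; apply/negbNE/yG.
have /negbNE := zF _ A1F; rewrite !inE eqxx /= orbF => /eqP zy.
by move: yA0; rewrite -zy zA0.
Qed.

Section Transposition.
Variables y x : 'I_k.

Definition swap_set A := tperm y x @: A.
Definition swap_fam F := swap_set @: F.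

Lemma mem_swap_set A z : (z \in swap_set A) = (tperm y x z \in A).
Proof. by rewrite -{1}(tpermK y x z) mem_imset //; exact: perm_inj. Qed.

Lemma swap_setK : involutive swap_set.
Proof. by move=> A; apply/setP => z; rewrite !mem_swap_set tpermK. Qed.

Lemma card_swap_set A : #|swap_set A| = #|A|.
Proof. by rewrite card_imset //; exact: perm_inj. Qed.

Lemma swap_setI A B : swap_set (A :&: B) = swap_set A :&: swap_set B.
Proof. by apply/setP => z; rewrite !(inE, mem_swap_set). Qed.

Lemma mem_swap_fam F A : (A \in swap_fam F) = (swap_set A \in F).
Proof. by rewrite -{1}(swap_setK A) mem_imset //; exact: inv_inj swap_setK. Qed.

Lemma wfam_swap_fam w F : wfam w (swap_fam F) = wfam w F.
Proof.
rewrite /wfam big_imset; last by move=> A B _ _; exact: (inv_inj swap_setK).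
by apply: eq_bigr => A _; rewrite card_swap_set.
Qed.

Lemma fam_on_swap_fam m s F : y \in seg k m -> x \in seg k m ->
  fam_on m s F -> fam_on m s (swap_fam F).
Proof.
move=> ym xm Fon A; rewrite mem_swap_fam => /Fon /andP[sAm]; rewrite card_swap_set => ->.
rewrite andbT; apply/subsetP => z zA.
have /(subsetP sAm) : tperm y x z \in swap_set A by rewrite mem_swap_set tpermK.
by case: tpermP => // ->.
Qed.

Lemma cross_tint_swap_fam t F G : cross_tint t F G -> cross_tint t (swap_fam F) (swap_fam G).
Proof.
by move=> FG A B; rewrite !mem_swap_fam => AF BG; rewrite -card_swap_set swap_setI FG.
Qed.

Lemma swap_fam_missed F : (exists2 A, A \in F & y \notin A) ->
  exists2 A, A \in swap_fam F & x \notin A.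
Proof.
case=> A AF yA; exists (swap_set A); first by rewrite mem_swap_fam swap_setK.
by rewrite mem_swap_set tpermR.
Qed.

End Transposition.

Definition critical (x : 'I_k) t A B := (x \in A :&: B) && (#|A :&: B| == t).

Definition critical_part x t F G := [set A in F | [exists B in G, critical x t A B]].

Lemma criticalC x t A B : critical x t A B = critical x t B A.
Proof. by rewrite /critical setIC. Qed.

Lemma card_critical x t A B : critical x t A B -> (#|(A :&: B) :\ x| < t)%N.
Proof. by case/andP=> xAB /eqP <-; rewrite (cardsD1 x (A :&: B)) xAB. Qed.

Lemma card_noncritical x t A B : (t <= #|A :&: B|)%N -> ~~ critical x t A B ->
  (t <= #|(A :&: B) :\ x|)%N.
Proof.
rewrite /critical (cardsD1 x (A :&: B)); case: (x \in _) => //= le_t ne_t.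
by rewrite -ltnS -add1n ltn_neqAle eq_sym ne_t.
Qed.

Definition cross_tint_off x t F G :=
  forall A B, A \in F -> B \in G -> (t <= #|(A :&: B) :\ x|)%N.

Definition shift_fam x t F G := F :|: [set A :\ x | A in critical_part x t F G].

Definition prune_fam x t G F := G :\: critical_part x t G F.

Section Shifting.
Variables (x : 'I_k) (t : nat).

Lemma fam_on_shift_fam m s F G : fam_on m s F -> fam_on m s (shift_fam x t F G).
Proof.
move=> Fon A; rewrite inE => /orP[/Fon //|/imsetP[A1 /setIdP[A1F _] ->]].
have /andP[sA1m cardA1] := Fon _ A1F; have sA1 := subsetDl A1 [set x].
by rewrite (subset_trans sA1) //= (leq_trans (subset_leq_card sA1)).
Qed.

Lemma fam_on_prune_fam m s G F : fam_on m s G -> fam_on m s (prune_fam x t G F).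
Proof. by move=> Gon B /setDP[/Gon]. Qed.

Lemma shift_fam_neq0 F G : F != set0 -> shift_fam x t F G != set0.
Proof. by case/set0Pn=> A AF; apply/set0Pn; exists A; rewrite inE AF. Qed.

Lemma prune_fam_neq0 G F : (exists2 B, B \in G & x \notin B) -> prune_fam x t G F != set0.
Proof.
case=> B BG xB; apply/set0Pn; exists B; rewrite inE BG andbT inE BG /=.
by apply/exists_inP => -[A _ /andP[]]; rewrite inE (negbTE xB).
Qed.

Lemma wfam_prune_fam w G F :
  wfam w G = wfam w (prune_fam x t G F) + wfam w (critical_part x t G F).
Proof.
rewrite /wfam (big_setID (critical_part x t G F)) addrC.
by rewrite (setIidPr _) //; apply/subsetP => B /setIdP[].
Qed.

Lemma wfam_shift_fam m s w F G : (m <= k)%N -> weight_on m w -> fam_on m s F ->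
  cross_tint t F G ->
  wfam w F + wfam w (critical_part x t F G) <= wfam w (shift_fam x t F G).
Proof.
move=> le_mk [_ w_decr] Fon FG.
have xF1 A : A \in critical_part x t F G -> x \in A.
  by case/setIdP=> _ /exists_inP[B _ /andP[]]; rewrite inE => /andP[].
have F1F A : A \in critical_part x t F G -> A :\ x \notin F.
  case/setIdP=> _ /exists_inP[B BG crAB]; apply/negP => AxF.
  by have := FG _ _ AxF BG; rewrite setIDAC leqNgt card_critical.
rewrite wfam_setU; last first.
  rewrite disjoint_sym disjoint_subset.
  by apply/subsetP => _ /imsetP[A /F1F nAF ->]; rewrite inE.
rewrite lerD2l /wfam big_imset; last first.
  by move=> A B /xF1 xA /xF1 xB /= eqAB; rewrite -(setD1K xA) eqAB setD1K.
apply: ler_sum => A /[dup] AF1 /setIdP[AF _].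
rewrite (cardsD1 x A) xF1 // add1n; apply: w_decr.
by have := card_le_seg le_mk (fam_on_sub Fon AF); rewrite (cardsD1 x A) xF1.
Qed.

Lemma cross_tint_off_shift_prune F G : cross_tint t F G ->
  cross_tint_off x t (shift_fam x t F G) (prune_fam x t G F).
Proof.
move=> FG A B; rewrite inE => AF' /setDP[BG BG1].
have noncrit A1 : A1 \in F -> ~~ critical x t A1 B.
  move=> A1F; apply: contra BG1 => crit; rewrite inE BG /=.
  by apply/exists_inP; exists A1; rewrite // criticalC.
case/orP: AF' => [AF|/imsetP[A1 /setIdP[A1F _] ->]].
  exact: card_noncritical (FG _ _ AF BG) (noncrit _ AF).
rewrite setIDAC setDDl setUid.
exact: card_noncritical (FG _ _ A1F BG) (noncrit _ A1F).
Qed.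

End Shifting.

Lemma uncritical_reduction m l l' t w1 w2 x F G : (m <= k)%N ->
  weight_on m w1 -> weight_on m w2 -> fam_on m l F -> fam_on m l' G -> cross_tint t F G ->
  (exists2 A, A \in F & x \notin A) -> (exists2 B, B \in G & x \notin B) ->
  exists F' G', [/\ fam_on m l F', fam_on m l' G', F' != set0, G' != set0
                  & cross_tint_off x t F' G'] /\
    wfam w1 F + wfam w2 G <= wfam w1 F' + wfam w2 G'.
Proof.
move=> le_mk w1W w2W Fon Gon FG FxA GxB.
have F0 : F != set0 by case: FxA => A AF _; apply/set0Pn; exists A.
have G0 : G != set0 by case: GxB => B BG _; apply/set0Pn; exists B.
case: (lerP (wfam w2 (critical_part x t G F)) (wfam w1 (critical_part x t F G))) => cmp.
- exists (shift_fam x t F G), (prune_fam x t G F); split.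
    split; [exact: fam_on_shift_fam | exact: fam_on_prune_fam | exact: shift_fam_neq0
           | exact: prune_fam_neq0 | exact: cross_tint_off_shift_prune].
  have := wfam_shift_fam x le_mk w1W Fon FG.
  rewrite (wfam_prune_fam x t w2 G F); lra.
- exists (prune_fam x t F G), (shift_fam x t G F); split.
    split; [exact: fam_on_prune_fam | exact: fam_on_shift_fam | exact: prune_fam_neq0
           | exact: shift_fam_neq0 | ].
    move=> A B AF' BG'; rewrite setIC.
    exact: cross_tint_off_shift_prune (cross_tint_sym FG) _ _ BG' AF'.
  have := wfam_shift_fam x le_mk w2W Gon (cross_tint_sym FG).
  rewrite (wfam_prune_fam x t w1 F G); lra.
Qed.

Definition trace_fam (x : 'I_k) F := [set A :\ x | A in F].

Definition untrace_fam (x : 'I_k) s Q :=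
  [set A : {set 'I_k} | (A :\ x \in Q) && ((x \in A) ==> (#|A :\ x| < s)%N)].

Definition trace_weight s w i := w i + (if (i < s)%N then w i.+1 else 0).

Lemma weight_on_trace m s w : weight_on m.+1 w -> weight_on m (trace_weight s w).
Proof.
case=> w_ge0 w_decr; split=> [i le_im|i lt_im]; rewrite /trace_weight.
  by rewrite addr_ge0 ?w_ge0 ?(leq_trans le_im) //; case: ifP => // _; apply: w_ge0.
apply: lerD; first exact/w_decr/ltnW.
case: (ltnP i.+1 s) => [lt_is|_]; first by rewrite (ltnW lt_is); apply: w_decr.
by case: ifP => // _; apply: w_ge0; rewrite ltnS ltnW.
Qed.

Lemma wfam_split w x P : wfam w P =
  \sum_(A in P | x \notin A) w #|A| +
  \sum_(X : {set 'I_k} | (x \notin X) && (x |: X \in P)) w #|X|.+1.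
Proof.
rewrite /wfam (bigID (fun A => x \notin A)) /=; congr (_ + _).
rewrite (reindex_onto (fun X => x |: X) (fun A => A :\ x)); last first.
  by move=> A /andP[_]; rewrite negbK => /setD1K.
apply: eq_big => [X|X /andP[_ /eqP <-]]; last by rewrite cardsU1 setD11.
rewrite setU11 andbT andbC; have [xX|xX] /= := boolP (x \in X).
  by apply/negbTE/negP => /andP[/eqP eqX _]; move: xX; rewrite -eqX setD11.
by rewrite setU1K ?eqxx.
Qed.

Lemma wfam_untrace w x s Q : (forall A, A \in Q -> x \notin A) ->
  wfam w (untrace_fam x s Q) = wfam (trace_weight s w) Q.
Proof.
move=> Qx; rewrite (wfam_split w x) /wfam /trace_weight big_split /=; congr (_ + _).
  apply: eq_bigl => A; rewrite inE; have [xA|xA] := boolP (x \in A).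
    by rewrite andbF; apply/esym/negbTE; apply: contraL xA; apply: Qx.
  by rewrite setD1_id //= !andbT.
rewrite big_mkcond [RHS]big_mkcond; apply: eq_bigr => X _.
have [xX|xX] /= := boolP (x \in X).
  by case: ifP => // XQ; move: xX; rewrite (negbTE (Qx _ XQ)).
rewrite inE setU1K // setU11 /=.
by case: (X \in Q); case: (_ < s)%N.
Qed.

Lemma trace_fam_neq0 x F : F != set0 -> trace_fam x F != set0.
Proof. by rewrite imset_eq0. Qed.

Lemma cross_tint_trace x t F G : cross_tint_off x t F G ->
  cross_tint t (trace_fam x F) (trace_fam x G).
Proof. by move=> FG _ _ /imsetP[A AF ->] /imsetP[B BG ->]; rewrite -setDIl FG. Qed.

Section LastPoint.
Variables (m : nat) (x : 'I_k).
Hypothesis x_last : nat_of_ord x = m.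

Lemma subset_seg_S A : (A \subset seg k m.+1) = (A :\ x \subset seg k m).
Proof.
apply/subsetP/subsetP => sA z; rewrite !inE.
  case/andP=> zx /sA; rewrite inE ltnS leq_eqVlt => /orP[/eqP zm|//].
  by move: zx; rewrite -val_eqE /= zm x_last eqxx.
have [/eqP -> _|zx zA] := boolP (z == x); first by rewrite x_last.
by have := sA z; rewrite !inE zx zA => /(_ isT) /ltnW.
Qed.

Lemma last_notin_seg a : (a <= m)%N -> x \notin seg k a.
Proof. by rewrite inE x_last -leqNgt. Qed.

Lemma last_notin_fam s F : fam_on m s F -> forall A, A \in F -> x \notin A.
Proof.
move=> Fon A /(fam_on_sub Fon) sAm.
exact: contra (subsetP sAm x) (last_notin_seg (leqnn m)).
Qed.

Lemma fam_on_trace s F : fam_on m.+1 s F -> fam_on m s (trace_fam x F).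
Proof.
move=> Fon _ /imsetP[A AF ->]; have /andP[sAm cardA] := Fon _ AF.
by rewrite -subset_seg_S sAm (leq_trans _ cardA) // subset_leq_card // subsetDl.
Qed.

Lemma wfam_le_trace s w F : weight_on m.+1 w -> fam_on m.+1 s F ->
  wfam w F <= wfam (trace_weight s w) (trace_fam x F).
Proof.
move=> [w_ge0 _] Fon; have le_mk : (m <= k)%N by rewrite -x_last ltnW.
have traceF := fam_on_trace Fon.
rewrite -(wfam_untrace w s (last_notin_fam traceF)).
apply: wfam_le_subset => [A AF|A].
  rewrite inE (imset_f (fun B => B :\ x) AF); apply/implyP => xA.
  by have := fam_on_card Fon AF; rewrite (cardsD1 x A) xA.
rewrite inE => /andP[/(fam_on_sub traceF)/(card_le_seg le_mk) cardAx _].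
by apply: w_ge0; rewrite (cardsD1 x A) -add1n leq_add ?leq_b1.
Qed.

Lemma Kfam_on_untrace a s t : (a <= m)%N ->
  Kfam_on m.+1 a s t = untrace_fam x s (Kfam_on m a s t).
Proof.
move=> le_am; apply/setP => A; rewrite !inE subset_seg_S (card_le_setD1 x) setIDAC.
rewrite (setD1_id (A := A :&: seg k a)); last first.
  by rewrite in_setI (negbTE (last_notin_seg le_am)) andbF.
by case: (_ ==> _); rewrite ?andbT ?andbF.
Qed.

Lemma Sfam_on_untrace a s : (a <= m)%N -> Sfam_on m.+1 a s = untrace_fam x s (Sfam_on m a s).
Proof.
move=> le_am; apply/setP => A; rewrite !inE subset_seg_S (card_le_setD1 x) subsetD1.
rewrite last_notin_seg // andbT.
by case: (_ ==> _); rewrite ?andbT ?andbF.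
Qed.

End LastPoint.

Lemma fam_on_Kfam_on m a s t : fam_on m s (Kfam_on m a s t).
Proof. by move=> A; rewrite inE => /and3P[-> ->]. Qed.

Lemma fam_on_Sfam_on m a s : fam_on m s (Sfam_on m a s).
Proof. by move=> A; rewrite inE => /and3P[-> ->]. Qed.

Lemma bound_on_trace m l l' t w1 w2 : (m < k)%N ->
  bound_on m l l' t (trace_weight l w1) (trace_weight l' w2) <= bound_on m.+1 l l' t w1 w2.
Proof.
move=> lt_mk; have [x x_last] : {x : 'I_k | nat_of_ord x = m} by exists (Ordinal lt_mk).
have wK a s t' w : (a <= m)%N ->
    wfam (trace_weight s w) (Kfam_on m a s t') = wfam w (Kfam_on m.+1 a s t').
  move=> le_am; rewrite (Kfam_on_untrace x_last) // wfam_untrace //.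
  exact: (last_notin_fam x_last (@fam_on_Kfam_on m a s t')).
have wS a s w : (a <= m)%N ->
    wfam (trace_weight s w) (Sfam_on m a s) = wfam w (Sfam_on m.+1 a s).
  move=> le_am; rewrite (Sfam_on_untrace x_last) // wfam_untrace //.
  exact: (last_notin_fam x_last (@fam_on_Sfam_on m a s)).
by apply: le_max2; apply: le_bigmax_minnS => a le_am; rewrite wK ?wS.
Qed.

Lemma trace_reduction m l l' t w1 w2 F G y : (m < k)%N ->
  weight_on m.+1 w1 -> weight_on m.+1 w2 -> fam_on m.+1 l F -> fam_on m.+1 l' G ->
  cross_tint t F G -> y \in seg k m.+1 ->
  (exists2 A, A \in F & y \notin A) -> (exists2 B, B \in G & y \notin B) ->
  exists F' G', [/\ fam_on m l F', fam_on m l' G', F' != set0, G' != set0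
                  & cross_tint t F' G'] /\
    wfam w1 F + wfam w2 G <= wfam (trace_weight l w1) F' + wfam (trace_weight l' w2) G'.
Proof.
move=> lt_mk w1W w2W Fon Gon FG ym FyA GyB.
have [x x_last] : {x : 'I_k | nat_of_ord x = m} by exists (Ordinal lt_mk).
have xm : x \in seg k m.+1 by rewrite inE x_last.
have [F3 [G3 [[F3on G3on F30 G30 F3G3] le_FG]]] :=
  uncritical_reduction lt_mk w1W w2W (fam_on_swap_fam ym xm Fon) (fam_on_swap_fam ym xm Gon)
    (cross_tint_swap_fam FG) (swap_fam_missed x FyA) (swap_fam_missed x GyB).
exists (trace_fam x F3), (trace_fam x G3); split.
  split; [exact: fam_on_trace | exact: fam_on_trace | exact: trace_fam_neq0
         | exact: trace_fam_neq0 | exact: cross_tint_trace].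
rewrite -(wfam_swap_fam y x w1 F) -(wfam_swap_fam y x w2 G).
exact: le_trans le_FG (lerD (wfam_le_trace x_last w1W F3on) (wfam_le_trace x_last w2W G3on)).
Qed.

Lemma full_fam_le_bound_on m l l' t w1 w2 F G : (m <= k)%N -> weight_on m w2 ->
  fam_on m l F -> fam_on m l' G -> F != set0 -> G != set0 -> cross_tint t F G ->
  (forall A, A \in F -> A = seg k m) ->
  wfam w1 F + wfam w2 G <= bound_on m l l' t w1 w2.
Proof.
move=> le_mk w2W Fon Gon F0 G0 FG Ffull.
have [A0 A0F] := set0Pn _ F0; have [B0 B0G] := set0Pn _ G0.
have le_ml : (m <= l)%N by rewrite -(card_seg le_mk) -(Ffull _ A0F) (fam_on_card Fon A0F).
have le_tm : (t <= m)%N.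
  apply: leq_trans (FG _ _ A0F B0G) (card_le_seg le_mk _).
  exact: subset_trans (subsetIl _ _) (fam_on_sub Fon A0F).
have -> : F = Sfam_on m m l.
  apply/setP => A; rewrite inE; apply/idP/and3P => [AF|[sAm _ smA]].
    by rewrite (Ffull _ AF) subxx (card_seg le_mk) le_ml.
  have -> : A = seg k m by apply/eqP; rewrite eqEsubset sAm smA.
  by rewrite -(Ffull _ A0F).
have sGK : {subset G <= Kfam_on m m l' t}.
  move=> B BG; rewrite inE; have /andP[-> ->] := Gon _ BG.
  by rewrite setIC -(Ffull _ A0F) FG.
apply: le_trans (lerD (lexx _) (wfam_le_subset sGK _)) _.
  exact: fam_on_nonneg le_mk w2W (@fam_on_Kfam_on m m l' t).
rewrite /bound_on le_max; apply/orP; right.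
by apply: (bigmax_sup_seq _ m); rewrite // mem_index_iota le_tm ltnS leq_min le_ml leqnn.
Qed.

Lemma wfam_le_bound_on l l' t : (0 < t)%N -> forall m, (m <= k)%N -> forall w1 w2 F G,
  weight_on m w1 -> weight_on m w2 -> fam_on m l F -> fam_on m l' G ->
  F != set0 -> G != set0 -> cross_tint t F G ->
  wfam w1 F + wfam w2 G <= bound_on m l l' t w1 w2.
Proof.
move=> t_gt0; elim=> [|m IHm] le_mk w1 w2 F G w1W w2W Fon Gon F0 G0 FG.
  have [A AF] := set0Pn _ F0; have [B BG] := set0Pn _ G0.
  have := card_le_seg le_mk (subset_trans (subsetIl A B) (fam_on_sub Fon AF)).
  by rewrite leqn0 => /eqP ABt; have := FG _ _ AF BG; rewrite ABt leqNgt t_gt0.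
have [F' [G' [sFF' sGG' F'on G'on [F'G' satF']]]] := saturate Fon Gon FG.
have F'0 : F' != set0 by case/set0Pn: F0 => A /sFF' AF'; apply/set0Pn; exists A.
have G'0 : G' != set0 by case/set0Pn: G0 => B /sGG' BG'; apply/set0Pn; exists B.
apply: le_trans (_ : _ <= wfam w1 F' + wfam w2 G') _.
  apply: lerD; apply: wfam_le_subset => //.
    exact: (fam_on_nonneg le_mk w1W F'on).
  exact: (fam_on_nonneg le_mk w2W G'on).
have [[y [ym FyA GyB]]|Ffull|Gfull] :=
  full_or_missed_point F'0 G'0 F'on G'on F'G' satF'.
- have [F3 [G3 [[F3on G3on F30 G30 F3G3] le_FG]]] :=
    trace_reduction le_mk w1W w2W F'on G'on F'G' ym FyA GyB.
  apply: le_trans le_FG (le_trans _ (bound_on_trace l l' t w1 w2 le_mk)).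
  by apply: IHm => //; [exact: ltnW | exact: weight_on_trace | exact: weight_on_trace].
- exact: full_fam_le_bound_on.
- by rewrite addrC bound_onC; apply: full_fam_le_bound_on (cross_tint_sym F'G') Gfull.
Qed.

Lemma sub_seg_full A : A \subset seg k k.
Proof. by apply/subsetP => i _; rewrite inE ltn_ord. Qed.

Lemma Kfam_on_full a s t : Kfam_on k a s t = Kfam k a s t.
Proof. by apply/setP => A; rewrite !inE sub_seg_full. Qed.

Lemma Sfam_on_full a s : Sfam_on k a s = Sfam k a s.
Proof. by apply/setP => A; rewrite !inE sub_seg_full. Qed.

Lemma weight_on_good w : good_weight k w -> weight_on k w.
Proof. by case=> w_ge0 w_decr; split=> // i lt_ik; apply: w_decr. Qed.

End CrossIntersectingWeights.

Theorem theorem3p6 (R : realFieldType) (k l l' t : nat)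
  (F G : {set {set 'I_k}}) (w1 w2 : nat -> R) :
  (1 <= t)%N -> (t <= l')%N -> (l' <= l)%N -> (l <= k)%N ->
  (forall A, A \in F -> #|A| <= l)%N ->
  (forall B, B \in G -> #|B| <= l')%N ->
  F != set0 -> G != set0 ->
  cross_tint t F G ->
  good_weight k w1 -> good_weight k w2 ->
  wfam w1 F + wfam w2 G <=
  Num.max
    (\big[Num.max/0]_(t <= a < l'.+1)
        (wfam w1 (Kfam k a l t) + wfam w2 (Sfam k a l')))
    (\big[Num.max/0]_(t <= a < l.+1)
        (wfam w1 (Sfam k a l) + wfam w2 (Kfam k a l' t))).
Proof.
(* t <= l' is forced by G != set0 and cross_tint t F G. *)
move=> t_gt0 _ le_l'l le_lk Fl Gl' F0 G0 FG w1W w2W.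
have Fon : fam_on k l F by move=> A AF; rewrite sub_seg_full Fl.
have Gon : fam_on k l' G by move=> B BG; rewrite sub_seg_full Gl'.
apply: le_trans (wfam_le_bound_on t_gt0 (leqnn k) (weight_on_good w1W)
                   (weight_on_good w2W) Fon Gon F0 G0 FG) _.
rewrite /bound_on (minn_idPl (leq_trans le_l'l le_lk)) (minn_idPl le_lk).
under eq_bigr do rewrite Kfam_on_full Sfam_on_full.
by under [X in Num.max _ X]eq_bigr do rewrite Sfam_on_full Kfam_on_full.
Qed.
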